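(* Let $\mathcal{T}$ be a projective Fraïssé family of finite trees whose distinguished epimorphisms are monotone and which allows splitting edges. Let $(G_i)_{i<\omega}$ with epimorphisms $f^m_n\colon G_m\to G_n$ be a Fraïssé sequence for $\mathcal{T}$, let $\mathbb{G}=\varprojlim G_i\subseteq\prod_i G_i$ be the projective Fraïssé limit and $\pi\colon\mathbb{G}\to|\mathbb{G}|$ its topological realization. Then $\pi$ maps every point of weak coherence of $\mathbb{G}$ to a ramification point of the dendrite $|\mathbb{G}|$.
   Context: Graphs have reflexive symmetric edge relations; topological graphs carry a compact, Hausdorff, zero-dimensional, second countable topology with closed edge set; finite graphs are discrete. An epimorphism $g\colon B\to A$ of topological graphs is a continuous surjection with: $\langle a_1,a_2\rangle\in E(A)$ iff some $b_i\in g^{-1}(a_i)$ satisfy $\langle b_1,b_2\rangle\in E(B)$. Connectedness: a topological graph is disconnected if its vertex set splits into two nonempty disjoint closed sets with no edges between them. An epimorphism is monotone if all fibres are connected. A finite tree is a finite connected graph without cycles of nontrivial edges; the order $\mathrm{ord}(a)$ of a vertex is its number of neighbours other than itself (= number of components of the tree minus $a$). For a monotone epimorphism $f\colon B\to A$ of finite trees and $a\in A$ with $\mathrm{ord}(a)=n\ge3$, let $A_0,\dots,A_{n-1}$ be the components of $A\setminus\{a\}$; $a$ is a point of weak coherence of $f$, witnessed by $b$, if $b\in f^{-1}(a)$, $m=\mathrm{ord}(b)\ge n$, and there is an injection $p\colon n\to m$ such that, with $B_0,\dots,B_{m-1}$ the components of $B\setminus\{b\}$, $f^{-1}(A_i)\subseteq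 B_{p(i)}$ for all $i$. A point $x=(x_i)\in\varprojlim G_i$ is a point of weak coherence of the limit if there is $k$ such that for all $l>k$, $x_l$ is a point of weak coherence of $f^{l+1}_l$ witnessed by $x_{l+1}$. A projective Fraïssé family is a class of finite graphs with a distinguished class of epimorphisms, countably many up to isomorphism, containing identities, closed under composition, with joint projection and projective amalgamation. A Fraïssé sequence is a sequence $(G_n)$ with compatible distinguished epimorphisms $f^m_n$ such that every member of the family is the image of some $G_n$ under a distinguished epimorphism, and for every distinguished $f\colon A\to G_m$ there are $n\ge m$ and distinguished $g\colon G_n\to A$ with $f\circ g=f^n_m$; its inverse limit (edges coordinatewise) is the projective Fraïssé limit. Allowing splitting edges: for every member $G$ and nontrivial edge $\{a,b\}$, replacing it by a path $a,\ast,b$ through a new vertex gives a member, and the maps collapsing $\ast$ to $a$, resp. $b$, are distinguished. Under these hypotheses $\mathbb G$ is a prespace (edge relation an equivalence relation), $\pi$ is the quotient map onto $|\mathbb{G}|=\mathbb{G}/E(\mathbb{G})$, and $|\mathbb{G}|$ is a dendrite (compact metrizable connected locally connected space with unique arcs between points). A ramification point of a dendrite $X$ is a point $x$ with $X\setminus\{x\}$ having more than two components. *)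

From HB Require Import structures.
From mathcomp Require Import all_boot all_order all_algebra.
From mathcomp Require Import all_classical.
From mathcomp Require Import topology discrete_topology function_spaces
  subtype_topology.

Set Implicit Arguments.
Unset Strict Implicit.
Unset Printing Implicit Defensive.

Record fin_graph := FGraph {
  vert :> finType;
  edge : rel vert;
  edge_refl : reflexive edge;
  edge_sym : symmetric edge }.

Definition graph_epi (B A : fin_graph) (g : B -> A) : Prop :=
  (forall a : A, exists b : B, g b = a) /\
  (forall a1 a2 : A, edge a1 a2 <->
     exists b1 b2 : B, [/\ g b1 = a1, g b2 = a2 & edge b1 b2]).

Definition graph_iso (B A : fin_graph) (h : B -> A) : Prop :=
  bijective h /\ forall x y : B, edge (h x) (h y) = edge x y.

(* connectedness of the induced subgraph on S : no splitting of S into two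
   nonempty disjoint (closed: automatic for finite graphs) sets with no edge
   between them *)
Definition connectedb (A : fin_graph) (S : {set A}) : bool :=
  ~~ [exists U : {set A}, exists V : {set A},
       [&& U :|: V == S, U :&: V == finset.set0, U != finset.set0, V != finset.set0 &
           [forall u in U, forall v in V, ~~ edge u v]]].

Definition components (A : fin_graph) (S : {set A}) : {set {set A}} :=
  [set C : {set A} | [&& C != finset.set0, C \subset S, connectedb C &
     [forall D : {set A}, ((C \proper D) && (D \subset S)) ==> ~~ connectedb D]]].

Definition is_tree (A : fin_graph) : Prop :=
  connectedb [set: A] /\
  forall s : seq A, uniq s -> 3 <= size s -> ~~ cycle (@edge A) s.

Definition vorder (A : fin_graph) (a : A) : nat := #|[set b | edge a b & b != a]|.

Definition monotone_epi (B A : fin_graph) (g : B -> A) : Prop :=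
  forall a : A, connectedb [set b | g b == a].

Definition weak_coherence_witness (B A : fin_graph) (f : B -> A) (a : A) (b : B)
  : Prop :=
  [/\ 3 <= vorder a, f b = a, vorder a <= vorder b &
    exists p : {set A} -> {set B},
      {in components (~: [set a]) &, injective p} /\
      forall C, C \in components (~: [set a]) ->
        p C \in components (~: [set b]) /\ f @^-1: C \subset p C].

(* Splitting an edge {a,b} : vertices option G, None is the new vertex *)

Section Split.
Variables (G : fin_graph) (a b : G).

Definition split_rel (x y : option G) : bool :=
  match x, y with
  | Some u, Some v =>
      edge u v && ~~ ([&& u == a, v == b & a != b] || [&& u == b, v == a & a != b])
  | Some u, None | None, Some u => (u == a) || (u == b)
  | None, None => true
  end.

Lemma split_rel_refl : reflexive split_rel.
Proof.
case=> [u|] //=; rewrite edge_refl /=.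
apply/negP => /orP [] /and3P [/eqP Hua /eqP Hub Hab];
  by move: Hab; rewrite -Hua -Hub eqxx.
Qed.

Lemma split_rel_sym : symmetric split_rel.
Proof.
case=> [u|]; case=> [v|] //=.
rewrite edge_sym; congr (_ && ~~ _); rewrite orbC.
by congr (_ || _); rewrite !andbA; congr (_ && _); rewrite andbC.
Qed.

Definition split_edge : fin_graph :=
  @FGraph (option G : finType) split_rel split_rel_refl split_rel_sym.

Definition collapse_to (c : G) (x : split_edge) : G :=
  if x is Some u then u else c.

End Split.

(*   F : the class of members, D : the distinguished epimorphisms      *)

Definition distinguished_rel := forall B A : fin_graph, (B -> A) -> Prop.

Definition proj_fraisse_family (F : fin_graph -> Prop) (D : distinguished_rel)
  : Prop :=
  [/\
      (forall (B A : fin_graph) (g : B -> A), D B A g -> [/\ F B, F A & graph_epi g]),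
      (exists H : nat -> fin_graph, forall A, F A ->
          exists n, exists h : H n -> A, graph_iso h),
      (forall A, F A -> D A A id),
      (forall (C B A : fin_graph) (g : C -> B) (f : B -> A),
          D C B g -> D B A f -> D C A (f \o g)) &
      (
      (forall A B, F A -> F B ->
          exists C : fin_graph, exists (g : C -> A) (h : C -> B), D C A g /\ D C B h) /\
      (forall (A B C : fin_graph) (f : B -> A) (g : C -> A), D B A f -> D C A g ->
          exists E : fin_graph, exists (f0 : E -> B) (g0 : E -> C),
            [/\ D E B f0, D E C g0 & f \o f0 =1 g \o g0]))].

Definition family_of_trees (F : fin_graph -> Prop) : Prop :=
  forall A, F A -> is_tree A.

Definition monotone_family (D : distinguished_rel) : Prop :=
  forall (B A : fin_graph) (g : B -> A), D B A g -> monotone_epi g.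

Definition allows_splitting_edges (F : fin_graph -> Prop) (D : distinguished_rel)
  : Prop :=
  forall (G : fin_graph) (a b : G), F G -> a != b -> edge a b ->
    exists H : fin_graph, exists k : H -> split_edge a b,
      [/\ F H, graph_iso k,
          D H G (collapse_to a \o k) & D H G (collapse_to b \o k)].

Section Sequence.
Variables (G : nat -> fin_graph) (bond : forall n, G n.+1 -> G n).

(* f^{k+n}_n : G_(k+n) -> G_n *)
Fixpoint fmn (n k : nat) : G (k + n) -> G n :=
  match k return G (k + n) -> G n with
  | 0 => fun x => x
  | k'.+1 => fun x => @fmn n k' (@bond (k' + n) x)
  end.

End Sequence.

Definition fraisse_sequence (F : fin_graph -> Prop) (D : distinguished_rel)
  (G : nat -> fin_graph) (bond : forall n, G n.+1 -> G n) : Prop :=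
  [/\ (forall n, D (G n.+1) (G n) (@bond n)),
      (forall A : fin_graph, F A -> exists n, exists g : G n -> A, D (G n) A g) &
      (forall m (A : fin_graph) (f : A -> G m), D A (G m) f ->
          exists k, exists g : G (k + m) -> A,
            D (G (k + m)) A g /\ f \o g =1 @fmn G bond m k)].

Section Limit.
Local Open Scope classical_set_scope.
Variables (G : nat -> fin_graph) (bond : forall n, G n.+1 -> G n).

Definition prodG : topologicalType :=
  prod_topology (fun i => discrete_topology (G i)).

Definition lim_set : set prodG :=
  [set x : prodG | forall n, @bond n (x n.+1) = x n].

Definition plim : topologicalType := lim_set.

Definition coord (x : plim) (i : nat) : G i := (val x : prodG) i.

Definition lim_edge (x y : plim) : Prop := forall i, edge (coord x i) (coord y i).

Definition edge_class (x : plim) : set plim := [set y | lim_edge x y].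

(* |G| = G / E(G) : the set of E-classes with the quotient topology *)
Definition realization_set : set (set plim) := range edge_class.

Definition realization : Type := realization_set.

HB.instance Definition _ := Choice.on realization.

Definition realize (x : plim) : realization :=
  SigSub (mem_set (imageT edge_class x)).

Definition realization_open (U : set realization) : Prop :=
  open (realize @^-1` U).

Lemma realization_openT : realization_open setT.
Proof. by rewrite /realization_open preimage_setT; exact: openT. Qed.

Lemma realization_openI (U V : set realization) :
  realization_open U -> realization_open V -> realization_open (U `&` V).
Proof. by move=> oU oV; rewrite /realization_open preimage_setI; exact: openI. Qed.

Lemma realization_open_bigU (I : Type) (f : I -> set realization) :
  (forall i, realization_open (f i)) -> realization_open (\bigcup_i f i).
Proof.
move=> ofi; rewrite /realization_open preimage_bigcup.
by apply: bigcup_open => i _; exact: ofi.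
Qed.

HB.instance Definition _ := isOpenTopological.Build realization
  realization_openT realization_openI realization_open_bigU.

End Limit.

Definition lim_weak_coherence (G : nat -> fin_graph) (bond : forall n, G n.+1 -> G n)
  (x : plim bond) : Prop :=
  exists k, forall l, k < l ->
    weak_coherence_witness (@bond l) (coord x l) (coord x l.+1).

Local Open Scope classical_set_scope.

Definition ramification_point (X : topologicalType) (p : X) : Prop :=
  exists x y z : X,
    [/\ x != p, y != p, z != p &
      [/\ connected_component (~` [set p]) x != connected_component (~` [set p]) y,
          connected_component (~` [set p]) x != connected_component (~` [set p]) z &
          connected_component (~` [set p]) y != connected_component (~` [set p]) z]].

(* At a point of weak coherence x, from some level k on every component of
   G_l - x_l (a branch at x_l) lies in a branch at x_(l+1), different branches
   in different ones.  Hence, for points of the limit not E-related to x,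
   lying eventually in the same branch as a given point s is well defined;
   the set of these points is open, and so is its complement among the points
   not E-related to x, so its image under pi is clopen in |G| - pi(x).  As
   G_(k+1) is a tree, three neighbours of x_(k+1) lie in three different
   branches, and splitting the edge from x_(k+1) to each of them produces
   three points of the limit, not E-related to x, in three different branches.
   Splitting edges also shows that E is transitive, so that pi identifies
   exactly the E-related points. *)

From Pilot Require Import Defs.
From HB Require Import structures.
From mathcomp Require Import all_boot all_order all_algebra.
From mathcomp Require Import all_classical.
From mathcomp Require Import topology discrete_topology function_spaces
  subtype_topology.
Import mathcomp.boot.fintype mathcomp.boot.finset.

Set Implicit Arguments.
Unset Strict Implicit.
Unset Printing Implicit Defensive.

Local Notation coord := Defs.coord.

Section FiniteGraphs.

Variable A : fin_graph.
Implicit Types C S U V : {set A}.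

Lemma connectedbP C :
  reflect (forall U V, U :|: V = C -> U :&: V = set0 ->
             (forall u v, u \in U -> v \in V -> ~~ edge u v) ->
             U = set0 \/ V = set0)
          (connectedb C).
Proof.
apply: (iffP existsPn) => [noSplit U V UVC UV0 noE | split0 U].
  have /existsPn/(_ V) := noSplit U; rewrite UVC UV0 !eqxx /=.
  have [->|U0] := eqVneq U set0; first by left.
  have [->|V0] := eqVneq V set0; first by right.
  move=> /negP[]; apply/forallP => u; apply/implyP => uU.
  by apply/forallP => v; apply/implyP; exact: noE.
apply/existsPn => V; apply/negP => /and5P[/eqP UVC /eqP UV0 U0 V0 /forallP noE].
have noE' u v : u \in U -> v \in V -> ~~ edge u v.
  by move=> uU; move/implyP/(_ uU)/forall_inP: (noE u); apply.
by case: (split0 U V UVC UV0 noE') => UV; [move: U0|move: V0]; rewrite UV eqxx.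
Qed.

Lemma connectedb_sub_or C U V :
  connectedb C -> C \subset U :|: V -> U :&: V = set0 ->
  (forall u v, u \in U -> v \in V -> ~~ edge u v) ->
  C \subset U \/ C \subset V.
Proof.
move=> /connectedbP connC CUV UV0 noE.
have [||u v|CU0|CV0] := connC (C :&: U) (C :&: V).
- by rewrite -setIUr; apply/setIidPl.
- by rewrite setIACA setIid UV0 setI0.
- by rewrite !inE => /andP[_ uU] /andP[_ vV]; exact: noE.
- right; apply/subsetP => c cC; move/subsetP/(_ c cC): CUV.
  rewrite inE => /orP[cU|//].
  have : c \in C :&: U by rewrite inE cC cU.
  by rewrite CU0 inE.
- left; apply/subsetP => c cC; move/subsetP/(_ c cC): CUV.
  rewrite inE => /orP[//|cV].
  have : c \in C :&: V by rewrite inE cC cV.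
  by rewrite CV0 inE.
Qed.

Lemma connectedbU_edge C1 C2 u1 u2 :
  connectedb C1 -> connectedb C2 -> u1 \in C1 -> u2 \in C2 -> edge u1 u2 ->
  connectedb (C1 :|: C2).
Proof.
move=> conn1 conn2 u1C1 u2C2 e12; apply/connectedbP => U V UVC UV0 noE.
have sub1 : C1 \subset U :|: V by rewrite UVC subsetUl.
have sub2 : C2 \subset U :|: V by rewrite UVC subsetUr.
have other W W' : W :|: W' = C1 :|: C2 -> W :&: W' = set0 ->
    C1 :|: C2 \subset W -> W' = set0.
  move=> WWC WW0 sW; apply/setP => w; rewrite inE; apply/negP => wW'.
  have /(subsetP sW) wW : w \in C1 :|: C2 by rewrite -WWC inE wW' orbT.
  have : w \in W :&: W' by rewrite inE wW wW'.
  by rewrite WW0 inE.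
have [s1|s1] := connectedb_sub_or conn1 sub1 UV0 noE;
  have [s2|s2] := connectedb_sub_or conn2 sub2 UV0 noE.
- by right; apply: (other U) => //; rewrite subUset s1.
- by move: (noE _ _ (subsetP s1 _ u1C1) (subsetP s2 _ u2C2)); rewrite e12.
- move: (noE _ _ (subsetP s2 _ u2C2) (subsetP s1 _ u1C1)).
  by rewrite edge_sym e12.
- left; apply: (other V); last by rewrite subUset s1.
  + by rewrite setUC.
  + by rewrite setIC.
Qed.

Lemma connectedb_set1 (a : A) : connectedb [set a].
Proof.
apply/connectedbP => U V UVa UV0 _.
have [->|[u uU]] := set_0Vmem U; first by left.
have [->|[v vV]] := set_0Vmem V; first by right.
have : u \in U :|: V by rewrite inE uU.
have : v \in U :|: V by rewrite inE vV orbT.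
rewrite UVa !inE => /eqP va /eqP ua.
have : u \in U :&: V by rewrite inE uU ua -va vV.
by rewrite UV0 inE.
Qed.

Lemma componentsP S C :
  reflect [/\ C != set0, C \subset S, connectedb C &
             forall D : {set A}, C \proper D -> D \subset S -> ~~ connectedb D]
          (C \in components S).
Proof.
rewrite inE; apply: (iffP and4P).
  move=> [C0 CS connC /forallP maxC].
  by split=> // D CD DS; move/implyP: (maxC D); rewrite CD DS; apply.
move=> [C0 CS connC maxC]; split=> //.
by apply/forallP => D; apply/implyP => /andP[CD DS]; exact: maxC.
Qed.

Lemma components_cover S v : v \in S -> exists2 C, C \in components S & v \in C.
Proof.
move=> vS; pose P C := [&& v \in C, C \subset S & connectedb C].
have Pv : P [set v] by rewrite /P set11 sub1set vS connectedb_set1.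
have [C /and3P[vC CS connC] maxC] := @arg_maxnP _ [set v] P (fun C => #|C|) Pv.
exists C => //; apply/componentsP; split=> //; first by apply/set0Pn; exists v.
move=> D CD DS; apply/negP => connD.
have /maxC : P D by rewrite /P (subsetP (proper_sub CD)) ?DS ?connD.
by move=> /= DC; have := proper_card CD; rewrite ltnNge DC.
Qed.

Lemma components_edge S C u w :
  C \in components S -> u \in C -> w \in S -> edge u w -> w \in C.
Proof.
move=> /componentsP[_ CS connC maxC] uC wS e; apply/negPn/negP => wC.
have /negP[] : ~~ connectedb (C :|: [set w]).
  by apply: maxC; rewrite ?properUl ?sub1set // subUset CS sub1set wS.
exact: connectedbU_edge connC (connectedb_set1 w) uC (set11 w) e.
Qed.

Lemma components_eq S C1 C2 v :
  C1 \in components S -> C2 \in components S -> v \in C1 -> v \in C2 -> C1 = C2.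
Proof.
have sub D1 D2 : D1 \in components S -> D2 \in components S ->
    v \in D1 -> v \in D2 -> D2 \subset D1.
  move=> /componentsP[_ D1S connD1 maxD1] /componentsP[_ D2S connD2 _] vD1 vD2.
  apply/negPn/negP => D21; have /negP[] : ~~ connectedb (D1 :|: D2).
    by apply: maxD1; rewrite ?properUl // subUset D1S.
  exact: connectedbU_edge connD1 connD2 vD1 vD2 (edge_refl v).
by move=> *; apply/eqP; rewrite eqEsubset !sub.
Qed.

Lemma connectedb_connect C u v :
  connectedb C -> u \in C -> v \in C -> connect [rel x y in C | edge x y] u v.
Proof.
move=> /connectedbP connC uC vC.
pose R := [set w in C | connect [rel x y in C | edge x y] u w].
have [||w w'|R0|CR0] := connC R (C :\: R).
- by apply/setP => w; rewrite !inE; case: (w \in C); case: connect.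
- by apply/setP => w; rewrite !inE; case: (w \in C); case: connect.
- move=> /setIdP[wC uw] /setDP[w'C w'R]; apply: contraNN w'R => e.
  by rewrite inE w'C (connect_trans uw) // connect1 //= wC w'C.
- have : u \in R by rewrite inE uC connect0.
  by rewrite R0 inE.
- have : v \notin C :\: R by rewrite CR0 inE.
  by rewrite !inE vC /= andbT => /negPn.
Qed.

Lemma tree_component_neighbour_uniq (a n1 n2 : A) C :
  is_tree A -> C \in components (~: [set a]) -> n1 \in C -> n2 \in C ->
  edge a n1 -> edge a n2 -> n1 = n2.
Proof.
move=> [_ acyclic] Ca n1C n2C e1 e2; apply/eqP/negP => /negP n12.
have [_ CS connC _] := componentsP _ _ Ca.
have aC : a \notin C by apply/negP => /(subsetP CS); rewrite !inE eqxx.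
have /connectP[p pC lastp] := connectedb_connect connC n1C n2C.
case: (shortenP pC) lastp => q qC q_uniq _ lastq.
have qinC : all (mem C) q.
  by move: (n1) qC; elim: (q) => //= y r IH z /andP[/andP[/andP[_ ->] _] /IH].
have cyc_uniq : uniq (a :: n1 :: q).
  rewrite cons_uniq q_uniq andbT inE negb_or; apply/andP; split.
  - by apply: contraNneq aC => ->.
  - by apply: contraNN aC => /(allP qinC).
have cyc_size : 3 <= size (a :: n1 :: q).
  case: q lastq {qC q_uniq qinC cyc_uniq} => [/= n21|//].
  by rewrite n21 eqxx in n12.
have /negP[] := acyclic _ cyc_uniq cyc_size.
rewrite /cycle rcons_cons /= e1 rcons_path -lastq edge_sym e2 andbT.
by apply: sub_path qC => y z /andP[_ ->].
Qed.

End FiniteGraphs.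

Lemma thread_through (T : nat -> Type) (bond : forall n, T n.+1 -> T n)
    (pre : forall n, T n -> T n.+1) :
  (forall n, cancel (pre n) (bond n)) ->
  forall l (v : T l),
    exists y : forall m, T m, (forall m, bond m (y m.+1) = y m) /\ y l = v.
Proof.
move=> preK l; elim: l T bond pre preK => [|l IH] T bond pre preK v.
  exists (fix y m : T m := if m is m'.+1 then pre m' (y m') else v).
  by split=> // m; rewrite preK.
(* a thread of the shifted sequence through v, extended by one level below *)
have [y [ycoh yl]] := IH (fun n => T n.+1) (fun n => bond n.+1)
  (fun n => pre n.+1) (fun n => preK n.+1) v.
exists (fun m => if m is m'.+1 return T m then y m' else bond 0 (y 0)).
by split=> // -[|m] //=; rewrite ycoh.
Qed.

Lemma collapse_to_Some (A : fin_graph) (a b c : A) (y : split_edge a b) v :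
  collapse_to c y = v -> v != c -> y = Some v.
Proof. by case: y => [u /= ->|/= <-] //; rewrite eqxx. Qed.

Local Open Scope classical_set_scope.

Lemma connected_component_clopen_neq (T : topologicalType) (A S : set T) u w :
  S `<=` A -> open S -> open (A `\` S) -> S u -> A w -> ~ S w ->
  connected_component A u != connected_component A w.
Proof.
move=> SA oS oAS Su Aw nSw; apply/eqP => cc.
have : connected_component A u w by rewrite cc; exact: connected_component_refl.
case=> B [Bu BA connB] Bw.
suff BS : B `&` S = B by apply: nSw; have [] : (B `&` S) w by rewrite BS.
apply: connB; [by exists u | by exists S |].
exists (~` (A `\` S)); first by rewrite closedC.
apply/seteqP; split=> [z [Bz Sz]|z [Bz nASz]]; first by split=> // -[].
by split=> //; apply: contrapT => nSz; exact: nASz (conj (BA z Bz) nSz).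
Qed.

Section Cylinders.

Variables (G : nat -> fin_graph) (bond : forall n, G n.+1 -> G n).

Lemma open_cylinder J (v : G J) : open [set z : plim bond | coord z J = v].
Proof.
have coordJ_cont :
    continuous (fun z : plim bond => coord z J : discrete_topology (G J)).
  have val_cont : continuous (fun z : plim bond => set_val z : prodG G).
    exact: initial_continuous.
  have proj_cont := @proj_continuous nat (fun i => discrete_topology (G i)) J.
  by move=> z; exact: continuous_comp (val_cont z) (proj_cont _).
move: coordJ_cont; rewrite continuousP => /(_ [set v]); apply.
exact: (@discrete_open (discrete_topology (G J))).
Qed.

Lemma open_cylinder_nbhs (O : set (plim bond)) :
  (forall z, O z -> exists J, forall w, coord w J = coord z J -> O w) -> open O.
Proof.
move=> cylO; rewrite openE => z Oz; have [J OJ] := cylO z Oz.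
apply: (@filterS _ _ _ [set w | coord w J = coord z J]); first by move=> w /OJ.
exact: open_nbhs_nbhs (conj (open_cylinder (coord z J)) erefl).
Qed.

Lemma realization_open_preimage (U : set (realization bond)) :
  open (@realize G bond @^-1` U) -> open U.
Proof. by []. Qed.

End Cylinders.

Section Limit.

Variables (F : fin_graph -> Prop) (D : distinguished_rel).
Variables (G : nat -> fin_graph) (bond : forall n, G n.+1 -> G n).
Hypotheses (hfam : proj_fraisse_family F D) (hsplit : allows_splitting_edges F D).
Hypothesis hseq : fraisse_sequence F D bond.

Lemma bond_member_epi n : [/\ F (G n.+1), F (G n) & graph_epi (@bond n)].
Proof.
case: hfam => distinguished_epi _ _ _ _.
by case: hseq => /(_ n) /distinguished_epi.
Qed.

Lemma bond_edge n (u v : G n.+1) : edge u v -> edge (bond u) (bond v).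
Proof.
by have [_ _ [_ epi]] := bond_member_epi n; move=> e; apply/epi; exists u, v.
Qed.

Lemma coord_bond (z : plim bond) n : bond (coord z n.+1) = coord z n.
Proof. exact: set_mem (valP z) n. Qed.

Lemma fmn_coord (z : plim bond) n k :
  @fmn G bond n k (coord z (k + n)) = coord z n.
Proof. by elim: k => //= k IH; rewrite coord_bond. Qed.

Lemma coord_nedge_le (z w : plim bond) J J' : J <= J' ->
  ~~ edge (coord z J) (coord w J) -> ~~ edge (coord z J') (coord w J').
Proof.
move=> /subnK <-; elim: (J' - J) => // d IH /IH; apply: contraNN => e.
by rewrite -(coord_bond z) -(coord_bond w); exact: bond_edge e.
Qed.

Lemma coord_surj n (v : G n) : exists z : plim bond, coord z n = v.
Proof.
have bond_surj m (a : G m) : exists b, bond b == a.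
  by have [_ _ [surj _]] := bond_member_epi m; have [b <-] := surj a; exists b.
have preK m : cancel (fun a => xchoose (bond_surj m a)) (@bond m).
  by move=> a; apply/eqP; exact: (xchooseP (bond_surj m a)).
have [y [ycoh yn]] := thread_through preK v.
have ylim : (y : prodG G) \in lim_set bond by exact: mem_set.
by exists (exist _ (y : prodG G) ylim).
Qed.

Lemma split_edge_lift J (a b c : G J) :
  a != b -> edge a b -> (c == a) || (c == b) ->
  exists d (h : G (d + J) -> split_edge a b),
    [/\ forall u v, edge u v -> edge (h u) (h v),
        forall y, exists u, h u = y &
        forall u, collapse_to c (h u) = @fmn G bond J d u].
Proof.
move=> ab eab cab.
have [_ FGJ _] := bond_member_epi J.
case: hfam => distinguished_epi _ _ _ _; case: hseq => _ _ extension.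
have [H [k [_ [[k' _ k'K] k_edge] Da Db]]] := hsplit FGJ ab eab.
have Dc : D (collapse_to c \o k) by case/orP: cab => /eqP ->.
have [d [g [Dg cg]]] := extension J _ _ Dc.
have [_ _ [g_surj g_edge]] := distinguished_epi _ _ _ Dg.
exists d, (k \o g); split=> [u v e|y|//].
  by rewrite (k_edge (g u) (g v)); apply/g_edge; exists u, v.
by have [u gu] := g_surj (k' y); exists u; rewrite /= gu k'K.
Qed.

(* If x_J and z_J were not adjacent, then after splitting the edge {x_J, y_J}
   no vertex would be adjacent to the lifts of both x_J and z_J. *)
Lemma lim_edge_trans (x y z : plim bond) :
  lim_edge x y -> lim_edge y z -> lim_edge x z.
Proof.
move=> xy yz J; apply/negPn/negP => nxz.
have xyJ : coord x J != coord y J by apply: contraNneq nxz => ->; exact: yz.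
have zyJ : coord z J != coord y J by apply: contraNneq nxz => ->; exact: xy.
have zxJ : coord z J != coord x J.
  by apply: contraNneq nxz => ->; exact: edge_refl.
have yxy : (coord y J == coord x J) || (coord y J == coord y J).
  by rewrite eqxx orbT.
have [d [h [h_edge _ hc]]] := split_edge_lift xyJ (xy J) yxy.
have hx : h (coord x (d + J)) = Some (coord x J).
  by apply: collapse_to_Some xyJ; rewrite hc fmn_coord.
have hz : h (coord z (d + J)) = Some (coord z J).
  by apply: collapse_to_Some zyJ; rewrite hc fmn_coord.
have := h_edge _ _ (xy (d + J)); have := h_edge _ _ (yz (d + J)).
rewrite hx hz; case: (h (coord y (d + J))) (hc (coord y (d + J))) => [u|] /=.
  by rewrite fmn_coord => -> _; rewrite !eqxx xyJ andbF.
by rewrite (negbTE zxJ) (negbTE zyJ).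
Qed.

Lemma neighbour_lift (z : plim bond) J (n : G J) :
  n != coord z J -> edge (coord z J) n ->
  exists s : plim bond, coord s J = n /\ ~ lim_edge s z.
Proof.
move=> nz e; have zn : coord z J != n by rewrite eq_sym.
have nzn : (n == coord z J) || (n == n) by rewrite eqxx orbT.
have [d [h [h_edge h_surj hc]]] := split_edge_lift zn e nzn.
have hz : h (coord z (d + J)) = Some (coord z J).
  by apply: collapse_to_Some zn; rewrite hc fmn_coord.
have [w hw] := h_surj (Some n).
have [s sw] := coord_surj w.
exists s; split; first by rewrite -(fmn_coord s J d) sw -hc hw.
by move=> /(_ (d + J)) /h_edge; rewrite sw hw hz /= !eqxx zn /= orbT andbF.
Qed.

Lemma realize_eq (z w : plim bond) : realize z = realize w <-> lim_edge z w.
Proof.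
split=> [/(congr1 val) /= zw | zw].
  have : edge_class w w by move=> i; exact: edge_refl.
  by rewrite -zw.
apply: val_inj; apply/funext => y /=; apply/propext; split.
  by apply: lim_edge_trans => i; rewrite edge_sym; exact: zw.
exact: lim_edge_trans.
Qed.

Lemma not_lim_edge_level (z w : plim bond) :
  ~ lim_edge z w -> exists J, ~~ edge (coord z J) (coord w J).
Proof. by move/existsNP => [J /negP]; exists J. Qed.

Section Branches.

Variables (x : plim bond) (k : nat).
Hypothesis x_coherent : forall l, k < l ->
  weak_coherence_witness (@bond l) (coord x l) (coord x l.+1).

Local Notation branches J := (components (~: [set coord x J])).

Definition same_branch J (u v : plim bond) : Prop :=
  exists2 C, C \in branches J & (coord u J \in C) && (coord v J \in C).

Definition other_branch J (u v : plim bond) : Prop :=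
  exists C C', [/\ C \in branches J, C' \in branches J, C != C',
                   coord u J \in C & coord v J \in C'].

Lemma propagate_le (P : nat -> Prop) : (forall J, k < J -> P J -> P J.+1) ->
  forall J J', k < J -> J <= J' -> P J -> P J'.
Proof.
move=> PS J J' kJ /subnK <-; elim: (J' - J) => // d IH /IH.
by apply: PS; rewrite (leq_trans kJ) // leq_addl.
Qed.

Lemma same_branch_le J J' u v :
  k < J -> J <= J' -> same_branch J u v -> same_branch J' u v.
Proof.
apply: (propagate_le (P := fun I => same_branch I u v)) => I kI.
move=> [C CI /andP[uC vC]].
have [_ _ _ [p [_ pC]]] := x_coherent kI; have [pCI Cp] := pC C CI.
by exists (p C) => //; rewrite !(subsetP Cp) // inE coord_bond.
Qed.

Lemma other_branch_le J J' u v :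
  k < J -> J <= J' -> other_branch J u v -> other_branch J' u v.
Proof.
apply: (propagate_le (P := fun I => other_branch I u v)) => I kI.
move=> [C [C' [CI C'I CC' uC vC']]].
have [_ _ _ [p [p_inj pC]]] := x_coherent kI.
have [pCI Cp] := pC C CI; have [pC'I C'p] := pC C' C'I.
exists (p C), (p C'); split=> //.
- by apply: contraNneq CC' => /(p_inj _ _ CI C'I) ->.
- by rewrite (subsetP Cp) // inE coord_bond.
- by rewrite (subsetP C'p) // inE coord_bond.
Qed.

Lemma same_other_branch J u v : same_branch J u v -> ~ other_branch J u v.
Proof.
move=> [C CJ /andP[uC vC]] [C1 [C2 [C1J C2J + uC1 vC2]]].
by rewrite -(components_eq CJ C1J uC uC1) -(components_eq CJ C2J vC vC2) eqxx.
Qed.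

Lemma same_branch_sym J u v : same_branch J u v -> same_branch J v u.
Proof. by move=> [C CJ /andP[uC vC]]; exists C; rewrite ?uC ?vC. Qed.

Lemma same_branch_trans J u v w :
  same_branch J u v -> same_branch J v w -> same_branch J u w.
Proof.
move=> [C CJ /andP[uC vC]] [C' C'J /andP[vC' wC']].
by exists C; rewrite // uC (components_eq CJ C'J vC vC') wC'.
Qed.

Lemma same_branch_refl J u : coord u J != coord x J -> same_branch J u u.
Proof.
rewrite -in_set1 -in_setC => /components_cover[C CJ uC].
by exists C; rewrite ?uC.
Qed.

Lemma same_branch_edge J u v w : same_branch J u v ->
  edge (coord u J) (coord w J) -> coord w J != coord x J -> same_branch J w v.
Proof.
move=> [C CJ /andP[uC vC]] e wx; exists C; rewrite // vC andbT.
by apply: components_edge CJ uC _ e; rewrite !inE.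
Qed.

Definition eventually_same_branch (s z : plim bond) : Prop :=
  exists2 J, k < J & same_branch J z s.

Definition branch (s : plim bond) : set (plim bond) :=
  [set z | ~ lim_edge z x /\ eventually_same_branch s z].

Lemma branch_edge s z w :
  lim_edge z w -> branch s z -> ~ lim_edge w x -> branch s w.
Proof.
move=> zw [_ [J kJ zs]] /[dup] wx /not_lim_edge_level[J0 wxJ0]; split=> //.
have JM := leq_maxl J J0; have J0M := leq_maxr J J0.
exists (maxn J J0); first exact: leq_trans kJ JM.
apply: same_branch_edge (same_branch_le kJ JM zs) (zw _) _.
by apply: contraNneq _ (coord_nedge_le J0M wxJ0) => ->; exact: edge_refl.
Qed.

Lemma branch_realize s z :
  (@realize _ bond @` branch s) (realize z) <-> branch s z.
Proof.
split=> [[w sw /realize_eq wz]|sz]; last by exists z.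
by apply: (branch_edge wz sw) => zx; exact: sw.1 (lim_edge_trans wz zx).
Qed.

Lemma open_branch s : open (branch s).
Proof.
apply: open_cylinder_nbhs => z [zx [J1 kJ1 zs]].
have [J0 zxJ0] := not_lim_edge_level zx.
have J0M := leq_maxl J0 J1; have J1M := leq_maxr J0 J1.
exists (maxn J0 J1) => w wz; split.
  move/(_ (maxn J0 J1)); rewrite wz; apply/negP.
  exact: coord_nedge_le J0M zxJ0.
exists (maxn J0 J1); first exact: leq_trans kJ1 J1M.
by have [C CM] := same_branch_le kJ1 J1M zs; exists C; rewrite // wz.
Qed.

Lemma open_not_branch s : open ([set z | ~ lim_edge z x] `\` branch s).
Proof.
apply: open_cylinder_nbhs => z [zx zs].
have [J0 zxJ0] := not_lim_edge_level zx.
set M := maxn J0 k.+1; have kM : k < M := leq_maxr J0 k.+1.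
have zxM := coord_nedge_le (leq_maxl J0 k.+1) zxJ0.
exists M => w wz.
have wx : ~ lim_edge w x by move/(_ M); rewrite wz; apply/negP.
split=> // -[_ [J kJ ws]]; apply: zs; split=> //.
have [C CM /andP[zC _]] : same_branch M z z.
  by apply: same_branch_refl; apply: contraNneq zxM => ->; exact: edge_refl.
have zw : same_branch M z w by exists C; rewrite // wz zC.
exists (maxn M J); first exact: leq_trans kM (leq_maxl M J).
exact: same_branch_trans (same_branch_le kM (leq_maxl M J) zw)
                         (same_branch_le kJ (leq_maxr M J) ws).
Qed.

Lemma branches_separate J s t : k < J -> ~ lim_edge s x -> ~ lim_edge t x ->
  other_branch J s t ->
  connected_component (~` [set realize x]) (realize s) !=
  connected_component (~` [set realize x]) (realize t).
Proof.
move=> kJ sx tx st.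
apply: (@connected_component_clopen_neq _ _ (@realize _ bond @` branch s)).
- by move=> _ [z [zx _] <-] /realize_eq.
- apply: realization_open_preimage.
  suff -> : @realize _ bond @^-1` (@realize _ bond @` branch s) = branch s.
    exact: open_branch.
  by apply/seteqP; split=> z /branch_realize.
- apply: realization_open_preimage.
  suff -> : @realize _ bond @^-1`
              (~` [set realize x] `\` (@realize _ bond @` branch s)) =
            [set z | ~ lim_edge z x] `\` branch s.
    exact: open_not_branch.
  apply/seteqP; split=> z [zx zs]; split.
  + by move=> /realize_eq.
  + by move=> /branch_realize.
  + by move=> /realize_eq.
  + by move=> /branch_realize.
- have [C [_ [CJ _ _ sC _]]] := st.
  by exists s => //; split=> //; exists J => //; exists C; rewrite // sC.
- by move=> /realize_eq.
- move=> /branch_realize[_ [J' kJ' ts]].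
  apply: (@same_other_branch (maxn J J') s t).
    exact: same_branch_sym (same_branch_le kJ' (leq_maxr J J') ts).
  exact: other_branch_le kJ (leq_maxl J J') st.
Qed.

Lemma ramification_of_three_branches J s0 s1 s2 : k < J ->
  ~ lim_edge s0 x -> ~ lim_edge s1 x -> ~ lim_edge s2 x ->
  other_branch J s0 s1 -> other_branch J s0 s2 -> other_branch J s1 s2 ->
  ramification_point (realize x).
Proof.
move=> kJ s0x s1x s2x s01 s02 s12.
exists (realize s0), (realize s1), (realize s2).
split; try by apply/eqP => /realize_eq.
by split; exact: branches_separate kJ _ _ _.
Qed.

Lemma tree_neighbours_other_branch J s t : is_tree (G J) ->
  coord s J != coord x J -> edge (coord x J) (coord s J) ->
  coord t J != coord x J -> edge (coord x J) (coord t J) ->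
  coord s J != coord t J -> other_branch J s t.
Proof.
move=> tree sx xs tx xt st.
have [C CJ sC] : exists2 C, C \in branches J & coord s J \in C.
  by apply: components_cover; rewrite !inE.
have [C' C'J tC'] : exists2 C, C \in branches J & coord t J \in C.
  by apply: components_cover; rewrite !inE.
exists C, C'; split=> //; apply: contraNneq st => CC'; rewrite -CC' in tC'.
by apply/eqP; exact: tree_component_neighbour_uniq tree CJ sC tC' xs xt.
Qed.

End Branches.

End Limit.

Theorem mainTheorem3 (F : fin_graph -> Prop) (D : distinguished_rel)
  (G : nat -> fin_graph) (bond : forall n : nat, G n.+1 -> G n) :
  proj_fraisse_family F D ->
  family_of_trees F ->
  monotone_family D ->
  allows_splitting_edges F D ->
  fraisse_sequence F D bond ->
  forall x : plim bond, lim_weak_coherence x ->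
    ramification_point (realize x).
Proof.
move=> hfam htree _ hsplit hseq x [k x_coherent].
have [deg3 _ _ _] := x_coherent k.+1 (ltnSn k).
have [_ /htree tree _] := bond_member_epi hfam hseq k.+1.
move: deg3; rewrite /vorder => /card_gt2P[n0 [n1 [n2 [[]]]]].
rewrite !inE => /andP[e0 n0x] /andP[e1 n1x] /andP[e2 n2x] [n01 n12 n20].
have [s0 [s0n s0x]] := neighbour_lift hfam hsplit hseq n0x e0.
have [s1 [s1n s1x]] := neighbour_lift hfam hsplit hseq n1x e1.
have [s2 [s2n s2x]] := neighbour_lift hfam hsplit hseq n2x e2.
apply: (ramification_of_three_branches hfam hsplit hseq x_coherent (ltnSn k)
          s0x s1x s2x);
  apply: tree_neighbours_other_branch; by rewrite ?s0n ?s1n ?s2n // eq_sym.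
Qed.
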